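(* Let $\alpha=(\alpha_1,\ldots,\alpha_n)$ be a composition, and suppose there is $1\le r\le n-1$ with $\alpha_r<\alpha_{r+1}$. Let $w\in S_n$ be a permutation in which the value $r$ appears before the value $r+1$. Then \[x(w)=x(s_rw)\cdot s_r.\]
   Context: A composition is a sequence of $n$ nonnegative integers. The skyline diagram $D(\alpha)$ is the set of boxes $(i,j)$ (row $i$, column $j$, rows numbered top to bottom) with $1\le j\le\alpha_i$. For $w=w_1\cdots w_n\in S_n$, the filling $\mathcal{F}_w(D(\alpha))$ is defined column by column: for each column $j$, for $k=1,\ldots,n$ in turn, place $w_k$ into the topmost still-empty box of column $j$ of $D(\alpha)$ whose row index is $\ge w_k$, skipping $w_k$ if no such box exists. Then $x(w)=(x_1,\ldots,x_n)$, where $x_k$ is the number of appearances of $k$ in $\mathcal{F}_w(D(\alpha))$. Here $s_rw$ is the permutation obtained from $w$ by interchanging the values $r$ and $r+1$, and for $v\in\mathbb{R}^n$, $v\cdot s_r$ is $v$ with its $r$-th and $(r+1)$-th entries swapped. *)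

(* Everything is 0-indexed: rows 0..n-1, values 0..n-1,
   columns 0..(max alpha)-1; box (i,j) is in D(alpha) iff j < alpha i.
   Shifting rows and values by the same amount preserves "row >= value". *)
From mathcomp Require Import all_boot all_fingroup.
Set Implicit Arguments. Unset Strict Implicit. Unset Printing Implicit Defensive.

(* Remove from the increasing list of empty rows [E] the first (= topmost)
   row [i] with [v <= i]; [None] if there is none. *)
Fixpoint take_row (v : nat) (E : seq nat) : option (seq nat) :=
  match E with
  | [::] => None
  | i :: E' => if v <= i then Some E'
               else match take_row v E' with
                    | Some E'' => Some (i :: E'')
                    | None => None
                    end
  end.

(* Fill one column whose empty boxes are the rows [E] (increasing), inserting
   the values [vals] in order; returns the list of values actually placed. *)
Fixpoint fill_column (E : seq nat) (vals : seq nat) : seq nat :=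
  match vals with
  | [::] => [::]
  | v :: vs => match take_row v E with
               | Some E' => v :: fill_column E' vs
               | None => fill_column E vs
               end
  end.

Definition column_rows n (alpha : 'I_n -> nat) (j : nat) : seq nat :=
  [seq i <- iota 0 n | j < (if insub i is Some k then alpha k else 0)].

Definition one_line n (w : 'S_n) : seq nat := [seq val (w k) | k <- enum 'I_n].

(* x(w)_k : number of appearances of k in F_w(D(alpha)) *)
Definition xvec n (alpha : 'I_n -> nat) (w : 'S_n) (k : 'I_n) : nat :=
  \sum_(j < \max_(i : 'I_n) alpha i)
     count_mem (val k) (fill_column (column_rows alpha j) (one_line w)).

(* s_r w : interchange the values r and r' in w  (k |-> tperm r r' (w k)) *)
Definition swap_vals n (r r' : 'I_n) (w : 'S_n) : 'S_n := (w * tperm r r')%g.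

(** Fix a column and compare the runs of the filling on [w] and on [s_r w].
    If row [r] is not free, no value can tell [r] from [r+1] when it looks for
    a row, so the second run is the first with [r] and [r+1] interchanged.
    If row [r] is free, so is row [r+1], since [alpha_r < alpha_(r+1)]; this
    stays true and the runs agree until [r] is inserted (it precedes [r+1]).
    Then [r] takes row [r] while, in the other run, [r+1] takes row [r+1], and
    the free rows differ only by [r+1] versus [r] until some value takes row
    [r+1] in one run and row [r] in the other, after which row [r] is no longer
    free in either run.  Counting values column by column gives the claim. *)
From mathcomp Require Import all_boot all_fingroup zify.
Set Implicit Arguments. Unset Strict Implicit. Unset Printing Implicit Defensive.

Definition adjswap (r v : nat) : nat :=
  if v == r then r.+1 else if v == r.+1 then r else v.

Ltac adjswap_lia := rewrite /adjswap; repeat (case: eqP => /=); lia.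

Lemma adjswapK r : involutive (adjswap r).
Proof. by move=> v; adjswap_lia. Qed.

Lemma take_row_subseq v E E1 : take_row v E = Some E1 -> subseq E1 E.
Proof.
elim: E E1 => [|i E IH] E1 //=.
case: ifP => _; first by case=> <-; apply: subseq_cons.
case h: (take_row v E) => [E2|] //; case=> <-.
by rewrite /= eqxx; apply: IH.
Qed.

Lemma take_row_keeps_lt v E E1 y :
  take_row v E = Some E1 -> y \in E -> y < v -> y \in E1.
Proof.
elim: E E1 => [|i E IH] E1 //=.
case: ifP => hvi.
  by case=> <-; rewrite inE => /orP [/eqP ->|//]; rewrite ltnNge hvi.
case h: (take_row v E) => [E2|] //; case=> <-.
by rewrite !inE => /orP [->//|yE] yv; rewrite (IH _ h yE yv) orbT.
Qed.

Lemma take_row_cat v x F1 F2 : all (fun y => y < v) F1 -> v <= x ->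
  take_row v (F1 ++ x :: F2) = Some (F1 ++ F2).
Proof.
move=> h1 hx; elim: F1 h1 => [|i F1 IH] /=; first by rewrite hx.
by move=> /andP [iv /IH ->]; rewrite leqNgt iv.
Qed.

Lemma take_row_adjswap_notin r v E :
  r \notin E -> take_row (adjswap r v) E = take_row v E.
Proof.
elim: E => [|i E IH] //=; rewrite inE negb_or => /andP [ri rE].
rewrite IH //; suff -> : (adjswap r v <= i) = (v <= i) by [].
by move: ri; adjswap_lia.
Qed.

Lemma fill_column_adjswap_notin r E s : r \notin E ->
  fill_column E (map (adjswap r) s) = map (adjswap r) (fill_column E s).
Proof.
elim: s E => [|v s IH] E rE //=; rewrite take_row_adjswap_notin //.
case h: (take_row v E) => [E1|]; last exact: IH.
rewrite /= IH //; apply: contra rE; apply: mem_subseq; exact: take_row_subseq h.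
Qed.

(* The free rows of the two runs once [r] has taken row [r] in the first and
   [r+1] has taken row [r+1] in the second. *)
Definition lowered_at r (E E' : seq nat) := exists F1 F2,
  [/\ all (fun x => x < r) F1, all (fun x => r.+1 < x) F2,
      E = F1 ++ r.+1 :: F2 & E' = F1 ++ r :: F2].

Variant lowered_step r : option (seq nat) -> option (seq nat) -> Prop :=
  | LoweredStep E1 E1' of lowered_at r E1 E1' :
      lowered_step r (Some E1) (Some E1')
  | LoweredMerge E1 of r \notin E1 : lowered_step r (Some E1) (Some E1)
  | LoweredSkip : lowered_step r None None.

Lemma take_row_lowered r v E E' : v != r -> lowered_at r E E' ->
  lowered_step r (take_row v E) (take_row (adjswap r v) E').
Proof.
move=> hv [F1 [F2 [h1 h2 -> ->]]]; elim: F1 h1 => [|i F1 IH] /=.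
  move=> _; case: (leqP v r.+1) => hvr.
    have -> : adjswap r v <= r by move: hv hvr; adjswap_lia.
    apply: LoweredMerge; apply/negP => /(allP h2); lia.
  have -> : adjswap r v = v by move: hvr; adjswap_lia.
  rewrite leqNgt (ltnW hvr) /=.
  case h: (take_row v F2) => [F2'|] //; last exact: LoweredSkip.
  apply: LoweredStep; exists [::], F2'; split => //.
  by apply/allP => x /(mem_subseq (take_row_subseq h)); apply: (allP h2).
case/andP=> ir h1; have {}IH := IH h1; case: (leqP v i) => hvi.
  have -> : adjswap r v = v by move: hvi ir; adjswap_lia.
  by rewrite hvi; apply: LoweredStep; exists F1, F2.
have -> : (adjswap r v <= i) = false by apply/negbTE; move: hvi ir hv; adjswap_lia.
case: IH => [E1 E1' [G1 [G2 [g1 g2 -> ->]]]|E1 hr|]; last exact: LoweredSkip.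
  by apply: LoweredStep; exists (i :: G1), G2; rewrite /= ir.
by apply: LoweredMerge; rewrite inE negb_or hr andbT; lia.
Qed.

Lemma fill_column_lowered r s E E' : r \notin s -> lowered_at r E E' ->
  fill_column E' (map (adjswap r) s) = map (adjswap r) (fill_column E s).
Proof.
elim: s E E' => [|v s IH] E E' //=; rewrite inE negb_or => /andP [hv hs] hE.
rewrite eq_sym in hv.
case: (take_row_lowered hv hE) => [E1 E1' hE1|E1 hr|] /=.
- by rewrite (IH _ _ hs hE1).
- by rewrite fill_column_adjswap_notin.
- exact: IH.
Qed.

Lemma pairwise_ltn_split r E : pairwise ltn E -> r \in E -> r.+1 \in E ->
  exists F1 F2, [/\ all (fun x => x < r) F1, all (fun x => r.+1 < x) F2 &
                 E = F1 ++ r :: r.+1 :: F2].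
Proof.
move=> hE hr; case/splitPr: hr hE => F1 F2.
rewrite pairwise_cat allrel_consr pairwise_cons.
case/and3P=> [/andP [h1 _] _ /andP [h2 hF2]]; rewrite mem_cat inE => hr1.
have hr1F2 : r.+1 \in F2.
  case/or3P: hr1 => [/(allP h1) /=|/eqP|//]; lia.
case: F2 h2 hF2 hr1F2 {hr1} => [|y F2] //= /andP [ry _].
rewrite inE => /andP [hy _] /orP [/eqP ey|/(allP hy) /=]; last lia.
by exists F1, F2; rewrite ey.
Qed.

Lemma take_row_succ_closed r v E E1 : pairwise ltn E ->
  (r \in E -> r.+1 \in E) -> v != r -> v != r.+1 ->
  take_row v E = Some E1 -> r \in E1 -> r.+1 \in E1.
Proof.
elim: E E1 => [|i E IH] E1 //= /andP [hi hE] hclosed hvr hvr1.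
have hr1E : r \in E -> r.+1 \in E.
  move=> hr; have := hclosed; rewrite inE hr orbT inE => /(_ isT) /orP [/eqP|//].
  by have /= := allP hi _ hr; lia.
case: ifP => hvi; first by case=> <-.
case h: (take_row v E) => [E2|] //; case=> <-; rewrite !inE.
case/orP => [/eqP ri|hr]; last by rewrite (IH _ hE hr1E hvr hvr1 h hr) orbT.
have hr1 : r.+1 \in E.
  by move: hclosed; rewrite !inE ri eqxx => /(_ isT) /orP [/eqP|//]; lia.
by rewrite (take_row_keeps_lt h hr1) ?orbT //; move: hvi hvr hvr1; rewrite ri; lia.
Qed.

Lemma fill_column_adjswap r s E : pairwise ltn E -> (r \in E -> r.+1 \in E) ->
  uniq s -> index r s <= index r.+1 s ->
  fill_column E (map (adjswap r) s) = map (adjswap r) (fill_column E s).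
Proof.
elim: s E => [|v s IH] E // hE hclosed; rewrite cons_uniq => /andP [vs us].
have [hrE|hrE] := boolP (r \in E); last by move=> _; apply: fill_column_adjswap_notin.
have [evr|hvr] := eqVneq v r.
  subst v => _; have [F1 [F2 [h1 h2 ->]]] := pairwise_ltn_split hE hrE (hclosed hrE).
  have h1' : all (fun y => y < r.+1) (rcons F1 r).
    by rewrite all_rcons ltnSn; apply: sub_all h1 => y /=; lia.
  rewrite /= {1}/adjswap eqxx (take_row_cat _ h1 (leqnn r)).
  rewrite -cat_rcons (take_row_cat _ h1' (leqnn _)) cat_rcons /=.
  by congr (_ :: _); apply: fill_column_lowered => //; exists F1, F2.
have [evr1|hvr1] := eqVneq v r.+1; first by subst v; rewrite /= eqxx; case: eqP => //; lia.
rewrite /= (negbTE hvr) (negbTE hvr1) ltnS => hidx.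
have hfix : adjswap r v = v by rewrite /adjswap (negbTE hvr) (negbTE hvr1).
rewrite hfix; case h: (take_row v E) => [E1|]; last exact: IH.
rewrite /= hfix; congr (_ :: _); apply: IH => //.
- exact: subseq_pairwise (take_row_subseq h) hE.
- exact: take_row_succ_closed h.
Qed.

Lemma val_tperm_succ n (r r' x : 'I_n) : val r' = (val r).+1 ->
  val (tperm r r' x) = adjswap (val r) (val x).
Proof.
move=> hr'; rewrite /adjswap -hr' !val_eqE.
case: tpermP => [->|->|/eqP hr /eqP hr'x]; rewrite ?eqxx //.
- by case: eqVneq => // e; move: hr'; rewrite e; lia.
- by rewrite (negbTE hr) (negbTE hr'x).
Qed.

Lemma one_line_uniq n (w : 'S_n) : uniq (one_line w).
Proof. by rewrite map_inj_uniq ?enum_uniq // => a b /val_inj /perm_inj. Qed.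

Lemma index_one_line n (w : 'S_n) (x : 'I_n) :
  index (val x) (one_line w) = val ((w^-1)%g x).
Proof.
rewrite /one_line -{1}(permKV w x) (index_map (f := fun k => val (w k))).
  exact: index_enum_ord.
by move=> a b /val_inj /perm_inj.
Qed.

Lemma one_line_swap_vals n (r r' : 'I_n) (w : 'S_n) : val r' = (val r).+1 ->
  one_line (swap_vals r r' w) = map (adjswap (val r)) (one_line w).
Proof.
move=> hr'; rewrite /one_line -map_comp; apply: eq_map => x /=.
by rewrite /swap_vals permM val_tperm_succ.
Qed.

Lemma column_rows_pairwise n (alpha : 'I_n -> nat) j :
  pairwise ltn (column_rows alpha j).
Proof.
by apply: pairwise_filter; rewrite -(sorted_pairwise ltn_trans) iota_ltn_sorted.
Qed.

Lemma column_rows_succ n (alpha : 'I_n -> nat) (r r' : 'I_n) j :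
  val r' = (val r).+1 -> alpha r <= alpha r' ->
  val r \in column_rows alpha j -> (val r).+1 \in column_rows alpha j.
Proof.
move=> hr' har; rewrite !mem_filter !mem_iota -hr' !valK /= !add0n ltn_ord.
by case/andP=> hj _; rewrite (leq_trans hj har).
Qed.

Unset Implicit Arguments.
Theorem proposition4p4 (n : nat) (alpha : 'I_n -> nat) (r r' : 'I_n)
  (hr' : val r' = (val r).+1)
  (halpha : alpha r < alpha r')
  (w : 'S_n)
  (hw : val ((w^-1)%g r) < val ((w^-1)%g r')) :
  forall k : 'I_n, xvec alpha w k = xvec alpha (swap_vals r r' w) (tperm r r' k).
Proof.
move=> k; apply: eq_bigr => j _.
rewrite one_line_swap_vals // fill_column_adjswap.
- rewrite val_tperm_succ // count_map; apply: eq_count => y /=.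
  by rewrite (inj_eq (can_inj (adjswapK _))).
- exact: column_rows_pairwise.
- exact: column_rows_succ (ltnW halpha).
- exact: one_line_uniq.
- by rewrite -hr' !index_one_line ltnW.
Qed.
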